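(* Let $M\subset\mathbb{R}^{2d}$ be a smooth closed hypersurface bounding a quadratically convex domain containing the origin in its interior. For every point $x$ in the exterior of $M$ there exists a unique point $n_-(x)\in M$ with $R(n_-(x))\sim -x$, and a unique point $n_+(x)\in M$ with $R(n_+(x))\sim x$. Explicitly, in terms of the outward unit normal Gauss map $G:M\to S^{2d-1}$, $$n_+(x)=G^{-1}\Big(-\frac{Jx}{|x|}\Big),\qquad n_-(x)=G^{-1}\Big(\frac{Jx}{|x|}\Big).$$
   Context: $\mathbb{R}^{2d}$ carries its standard inner product, norm $|\cdot|$, complex structure $J$ (orthogonal, $J^2=-I$) and symplectic form $\omega(u,v)=\langle Ju,v\rangle$. For $q\in M$ the Reeb vector $R(q)$ is the unique vector with $\omega(v,R(q))=0$ for all $v\in T_qM$ and $\omega(q,R(q))=1$. The notation $a\sim b$ means $a=\lambda b$ for some $\lambda>0$. The Gauss map $G$ sends $q\in M$ to the outward unit normal of $M$ at $q$; it is a diffeomorphism under the convexity assumption. *)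

From HB Require Import structures.
From mathcomp Require Import all_boot all_order all_algebra.
From mathcomp Require Import all_classical all_reals all_analysis.
Set Implicit Arguments. Unset Strict Implicit. Unset Printing Implicit Defensive.
Import Order.TTheory GRing.Theory Num.Theory.
Import numFieldNormedType.Exports.
Local Open Scope ring_scope.
Local Open Scope classical_set_scope.

(* R^{2d} is modelled as row vectors 'rV[R]_(d + d); a vector is (x, y)
   with x = lsubmx u, y = rsubmx u (each in R^d). *)
Notation Vec R d := 'rV[R]_(d + d).

Section Defs.
Variables (R : realType) (d : nat).

Definition dot (u v : Vec R d) : R := \sum_(i < d + d) u 0 i * v 0 i.
Definition enorm (u : Vec R d) : R := Num.sqrt (dot u u).

(* standard complex structure: J (x, y) = (-y, x), i.e. multiplication by i
   on C^d with z = x + i y. *)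
Definition Jst (u : Vec R d) : Vec R d := row_mx (- rsubmx u) (lsubmx u).

Definition omega (u v : Vec R d) : R := dot (Jst u) v.

Definition sim (a b : Vec R d) : Prop := exists2 l : R, 0 < l & a = l *: b.

Fixpoint dirder (f : Vec R d -> R) (vs : seq (Vec R d)) : Vec R d -> R :=
  match vs with
  | [::] => f
  | v :: vs' => fun x => derive (dirder f vs') x v
  end.

Definition smooth (f : Vec R d -> R) : Prop :=
  forall vs : seq (Vec R d),
    continuous (dirder f vs) /\ (forall x v, derivable (dirder f vs) x v).

(* Setting: M = g^{-1}(0) is a regular level set of a smooth g : R^{2d} -> R,
   the domain bounded by M is D = {g < 0}, its exterior is {g > 0}.
   Tangent space T_q M = ker dg(q). *)
Definition tangent (g : Vec R d -> R) (q v : Vec R d) : Prop :=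
  derive g q v = 0.

Definition is_reeb (g : Vec R d -> R) (q r : Vec R d) : Prop :=
  (forall v, tangent g q v -> omega v r = 0) /\ omega q r = 1.

Definition is_outward_normal (g : Vec R d -> R) (q n : Vec R d) : Prop :=
  enorm n = 1 /\ (forall v, tangent g q v -> dot n v = 0) /\ 0 < derive g q n.

Definition smooth_closed_hypersurface_defining (g : Vec R d -> R) : Prop :=
  [/\ smooth g,
      (forall q, g q = 0 -> exists v, derive g q v != 0) &
      (* compactness: the closed domain {g <= 0} is bounded *)
      (exists B : R, forall x, g x <= 0 -> enorm x <= B)].

Definition quadratically_convex_domain (g : Vec R d -> R) : Prop :=
  (forall x y (t : R), g x < 0 -> g y < 0 -> 0 <= t <= 1 ->
      g ((1 - t) *: x + t *: y) < 0) /\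
  (* second fundamental form positive definite on every tangent space *)
  (forall q v, g q = 0 -> v != 0 -> tangent g q v -> 0 < dirder g [:: v; v] q).

End Defs.

From HB Require Import structures.
From mathcomp Require Import all_boot all_order all_algebra.
From mathcomp Require Import all_classical all_reals all_analysis.
From mathcomp Require Import ring lra.
Import Order.TTheory GRing.Theory Num.Theory.
Import numFieldNormedType.Exports.
Local Open Scope ring_scope.
Local Open Scope classical_set_scope.

Set Implicit Arguments. Unset Strict Implicit. Unset Printing Implicit Defensive.

(* For z != 0 put n := - J z.  On M the Reeb vector is
   R(q) = J grad g(q) / <grad g(q), q>, whose denominator is positive because 0 lies
   inside the convex body {g <= 0}; hence R(q) ~ z exactly when grad g(q) ~ n, i.e.
   when n / |n| is the outward normal at q.  A maximiser of <n, .> on the compact body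
   {g <= 0} is such a point.  Two such points q1, q2 share their supporting half-space,
   which forces the segment [q1, q2] into M; the second derivative of g along it then
   vanishes, contradicting quadratic convexity.  The choices z = x and z = - x give
   n_+(x) and n_-(x). *)

Lemma le0_of_near0_le_mul (R : realType) (a b : R) :
  (\forall s \near 0^'+, a <= s * b) -> a <= 0.
Proof.
move=> ab; rewrite leNgt; apply/negP => a0.
have sb0 : (fun s : R => s * b) @ 0^'+ --> 0.
  by apply: cvg_at_right_filter; rewrite -[X in _ --> X](mul0r b); exact: cvgMr_tmp.
have /filter_ex[s [/lt_le_trans/[apply]]] : \forall s \near 0^'+, s * b < a /\ a <= s * b.
  by near=> s; split; near: s; [exact: cvgr_lt _ sb0 _ a0 | exact: ab].
by rewrite ltxx.
Unshelve. all: by end_near.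
Qed.

Section Euclidean.
Variables (R : realType) (d : nat).
Implicit Types (u v w : Vec R d) (k : R).

Lemma dotC u v : dot u v = dot v u.
Proof. by apply: eq_bigr => i _; rewrite mulrC. Qed.

Lemma dotDl u w v : dot (u + w) v = dot u v + dot w v.
Proof. by rewrite /dot -big_split; apply: eq_bigr => i _; rewrite !mxE mulrDl. Qed.

Lemma dotZl k u v : dot (k *: u) v = k * dot u v.
Proof. by rewrite /dot mulr_sumr; apply: eq_bigr => i _; rewrite !mxE mulrA. Qed.

Lemma dotNl u v : dot (- u) v = - dot u v.
Proof. by rewrite -scaleN1r dotZl mulN1r. Qed.

Lemma dotBl u w v : dot (u - w) v = dot u v - dot w v.
Proof. by rewrite dotDl dotNl. Qed.

Lemma dotDr u w v : dot v (u + w) = dot v u + dot v w.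
Proof. by rewrite dotC dotDl !(dotC v). Qed.

Lemma dotZr k u v : dot v (k *: u) = k * dot v u.
Proof. by rewrite dotC dotZl dotC. Qed.

Lemma dotNr u v : dot v (- u) = - dot v u.
Proof. by rewrite dotC dotNl dotC. Qed.

Lemma dotBr u w v : dot v (u - w) = dot v u - dot v w.
Proof. by rewrite dotDr dotNr. Qed.

Lemma dot0l v : dot 0 v = 0.
Proof. by rewrite -(scale0r 0) dotZl mul0r. Qed.

Lemma dot_ge0 v : 0 <= dot v v.
Proof. by apply: sumr_ge0 => i _; rewrite -expr2 sqr_ge0. Qed.

Lemma dot_eq0 v : (dot v v == 0) = (v == 0).
Proof.
apply/idP/eqP => [|->]; last by rewrite dot0l.
rewrite psumr_eq0 => [/allP v0|i _]; last by rewrite -expr2 sqr_ge0.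
apply/rowP => i; have := v0 i (mem_index_enum i).
by rewrite implyTb -expr2 sqrf_eq0 mxE => /eqP.
Qed.

Lemma dot_gt0 v : v != 0 -> 0 < dot v v.
Proof. by rewrite lt_def dot_eq0 dot_ge0 andbT. Qed.

Lemma dot_split u v :
  dot u v = \sum_(j < d) lsubmx u 0 j * lsubmx v 0 j
          + \sum_(j < d) rsubmx u 0 j * rsubmx v 0 j.
Proof. by rewrite /dot big_split_ord; congr (_ + _); apply: eq_bigr => j _; rewrite !mxE. Qed.

Lemma dotJl u v : dot (Jst u) v = - dot u (Jst v).
Proof.
rewrite !dot_split /Jst !row_mxKl !row_mxKr opprD -!sumrN addrC.
by congr (_ + _); apply: eq_bigr => j _; rewrite !mxE ?mulrN ?mulNr ?opprK.
Qed.

Lemma JstK u : Jst (Jst u) = - u.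
Proof.
rewrite /Jst row_mxKl row_mxKr -[RHS](hsubmxK (- u)).
by rewrite linearN /= [rsubmx (- u)]linearN.
Qed.

Lemma dotJJ u v : dot (Jst u) (Jst v) = dot u v.
Proof. by rewrite dotJl JstK dotNr opprK. Qed.

Lemma JstZ k u : Jst (k *: u) = k *: Jst u.
Proof. by rewrite /Jst !linearZ /= scale_row_mx scalerN. Qed.

Lemma JstN u : Jst (- u) = - Jst u.
Proof. by rewrite -scaleN1r JstZ scaleN1r. Qed.

Lemma enormZ k u : enorm (k *: u) = `|k| * enorm u.
Proof. by rewrite /enorm dotZl dotZr mulrA -expr2 sqrtrM ?sqr_ge0 // sqrtr_sqr. Qed.

Lemma enormN u : enorm (- u) = enorm u.
Proof. by rewrite -scaleN1r enormZ normrN normr1 mul1r. Qed.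

Lemma enormJ u : enorm (Jst u) = enorm u.
Proof. by rewrite /enorm dotJJ. Qed.

Lemma enorm_gt0 u : u != 0 -> 0 < enorm u.
Proof. by move=> u0; rewrite sqrtr_gt0 dot_gt0. Qed.

Lemma coord_le_enorm u i : `|u 0 i| <= enorm u.
Proof.
rewrite /enorm -(sqrtr_sqr (u 0 i)) ler_sqrt ?dot_ge0 // /dot (bigD1 i) //=.
by rewrite expr2 lerDl sumr_ge0 // => j _; rewrite -expr2 sqr_ge0.
Qed.

Lemma norm_le_enorm u : `|u| <= enorm u.
Proof.
rewrite [`|u|]mx_normrE; apply: bigmax_le => [|[i j] _ /=]; first exact: sqrtr_ge0.
by rewrite (ord1 i); exact: coord_le_enorm.
Qed.

Lemma dot_continuous u : continuous (dot u).
Proof.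
apply: continuous_big => [|i _]; first exact: add_continuous.
by move=> v; apply: cvgMl_tmp; [exact: nbhs_filter | exact: coord_continuous].
Qed.

Lemma colinear_of_orthogonal G z : G != 0 ->
  (forall u, dot G u = 0 -> dot z u = 0) -> z = (dot z G / dot G G) *: G.
Proof.
move=> G0 Gz; set c := dot z G / dot G G; apply/eqP; rewrite -subr_eq0 -dot_eq0.
have Gu : dot G (z - c *: G) = 0.
  by rewrite dotBr dotZr dotC /c mulfVK ?subrr // gt_eqF // dot_gt0.
by rewrite {1}dotBl dotZl Gz // Gu mulr0 subr0.
Qed.

Lemma nonneg_multiple_of_halfspace G n : G != 0 ->
  (forall w, dot G w < 0 -> dot n w <= 0) -> exists2 c, 0 <= c & n = c *: G.
Proof.
move=> G0 Gn; have GG := dot_gt0 G0.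
have Gn_le u : dot G u = 0 -> dot n u <= 0.
  move=> Gu; apply: (@le0_of_near0_le_mul _ _ (dot n G)); near=> s.
  have s0 : 0 < s by near: s; exact: nbhs_right_gt.
  have := Gn (u - s *: G); rewrite !dotBr !dotZr Gu sub0r oppr_lt0 mulr_gt0 //.
  by move=> /(_ isT); lra.
exists (dot n G / dot G G); last first.
  apply: colinear_of_orthogonal => // u Gu; apply/eqP.
  by rewrite eq_le Gn_le //= -oppr_le0 -dotNr Gn_le // dotNr Gu oppr0.
have := Gn (- G); rewrite !dotNr oppr_lt0 oppr_le0 => /(_ GG) nG.
by rewrite divr_ge0 // ltW.
Unshelve. all: by end_near.
Qed.

Lemma sim_sym u v : sim u v -> sim v u.
Proof.
move=> [k k0 ->]; exists k^-1; rewrite ?invr_gt0 //.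
by rewrite scalerA mulVf ?scale1r // gt_eqF.
Qed.

Lemma simZ k u v : 0 < k -> sim u v -> sim (k *: u) v.
Proof. by move=> k0 [l l0 ->]; exists (k * l); rewrite ?mulr_gt0 // scalerA. Qed.

End Euclidean.

Section DirectionalDerivative.
Variables (R : realType) (V : normedModType R).
Implicit Types (f : V -> R) (p v : V).

Lemma derive_approx f p v : derivable f p v -> forall e, 0 < e ->
  \forall h \near (0 : R), `|f (p + h *: v) - f p - h * 'D_v f p| <= e * `|h|.
Proof.
move=> /derivable_nbhs /eqaddoP fv e e0; apply: filterS (fv e e0) => h /=.
by rewrite !fctE opprD addrA (addrC (h *: v)).
Qed.

Lemma derive_of_approx f p v (l : R) :
  (forall e, 0 < e -> \forall h \near (0 : R)^',
     `|f (p + h *: v) - f p - h * l| <= e * `|h|) ->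
  'D_v f p = l.
Proof.
move=> fl; apply: cvg_lim => //; apply/cvgrPdist_le => e e0; near=> h.
have h0 : h != 0 by near: h; exact: nbhs_dnbhs_neq.
rewrite /= (addrC (h *: v)).
have -> : l - h^-1 *: (f (p + h *: v) - f p) = - h^-1 * (f (p + h *: v) - f p - h * l).
  by rewrite /GRing.scale /=; field.
rewrite normrM normrN normfV mulrC ler_pdivrMr ?normr_gt0 //.
by near: h; exact: fl.
Unshelve. all: by end_near.
Qed.

Lemma derive_gt0_incr f p v : derivable f p v -> 0 < 'D_v f p ->
  \forall s \near 0^'+, f p < f (p + s *: v).
Proof.
move=> fv D0; have e0 : 0 < 'D_v f p / 2 by rewrite divr_gt0.
near=> s; have s0 : 0 < s by near: s; exact: nbhs_right_gt.
have : `|f (p + s *: v) - f p - s * 'D_v f p| <= 'D_v f p / 2 * `|s|.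
  by near: s; apply: cvg_within; exact: derive_approx.
rewrite (gtr0_norm s0) ler_norml => /andP[+ _].
by have := mulr_gt0 s0 D0; lra.
Unshelve. all: by end_near.
Qed.

Lemma derive_lt0_decr f p v : derivable f p v -> 'D_v f p < 0 ->
  \forall s \near 0^'+, f (p + s *: v) < f p.
Proof.
move=> fv D0; have := derive_gt0_incr (derivableN fv).
by rewrite deriveN // oppr_gt0 => /(_ D0); apply: filterS => s; rewrite ltrN2.
Qed.

Lemma derive_le0 f p v : derivable f p v ->
  (\forall s \near 0^'+, f (p + s *: v) <= f p) -> 'D_v f p <= 0.
Proof.
move=> fv fle; rewrite leNgt; apply/negP => /(derive_gt0_incr fv) flt.
have /filter_ex[s [/lt_le_trans/[apply]]] :
    \forall s \near 0^'+, f p < f (p + s *: v) /\ f (p + s *: v) <= f p.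
  by near=> s; split; near: s.
by rewrite ltxx.
Unshelve. all: by end_near.
Qed.

Lemma derive_eq0 f p v : derivable f p v ->
  (\forall s \near 0^'+, f (p + s *: v) = f p) -> 'D_v f p = 0.
Proof.
move=> fv fc; apply/eqP; rewrite eq_le derive_le0 //=; last by apply: filterS fc => s ->.
rewrite -oppr_le0 -deriveN //; apply: derive_le0; first exact: derivableN.
by apply: filterS fc => s fs; rewrite !fctE fs.
Qed.

Lemma is_derive_line f y v (t : R) : derivable f (y + t *: v) v ->
  is_derive t 1 (fun s => f (y + s *: v)) ('D_v f (y + t *: v)).
Proof.
have E : (fun h : R => h^-1 *: (((fun s => f (y + s *: v)) \o shift t) (h *: 1)
                                  - f (y + t *: v)))
        = (fun h : R => h^-1 *: ((f \o shift (y + t *: v)) (h *: v) - f (y + t *: v))).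
  by apply: funext => h /=; rewrite [h *: 1]mulr1 scalerDl addrCA.
by move=> fv; apply: DeriveDef; rewrite /derivable /derive E.
Qed.

Lemma line_MVT f y v (s : R) : (forall x, derivable f x v) ->
  exists c, `|c| <= `|s| /\ f (y + s *: v) - f y = s * 'D_v f (y + c *: v).
Proof.
move=> fv; pose phi t := f (y + t *: v).
have dphi (t : R) : is_derive t (1 : R) phi ('D_v f (y + t *: v)) by exact: is_derive_line.
have cphi (a b : R) : {within `[a, b], continuous phi}.
  by apply: derivable_within_continuous => t _; exact: ex_derive.
have -> : f y = phi 0 by rewrite /phi scale0r addr0.
case: (leP 0 s) => s0.
- have [c] := MVT_segment s0 (fun t _ => dphi t) (cphi 0 s).
  rewrite in_itv /= => /andP[c0 cs] E; exists c.
  by split; [rewrite !ger0_norm | rewrite E subr0 mulrC].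
- have [c] := MVT_segment (ltW s0) (fun t _ => dphi t) (cphi s 0).
  rewrite in_itv /= => /andP[sc c0] E; exists c.
  split; first by rewrite !ler0_norm ?lerN2 // ltW.
  by rewrite -opprB E sub0r mulrN mulrC opprK.
Qed.

Lemma derive_dirD f p a b : derivable f p a -> (forall x, derivable f x b) ->
  {for p, continuous ('D_b f)} -> 'D_(a + b) f p = 'D_a f p + 'D_b f p.
Proof.
(* Mean value theorem along b from p + h a, then continuity of 'D_b f at p. *)
move=> fa fb cb; apply: derive_of_approx => e e0.
have e2 : 0 < e / 2 by rewrite divr_gt0.
move/cvgrPdist_le: cb => /(_ _ e2) /nbhs_ballP[del del0 Db].
have ab0 : 0 < `|a| + `|b| + 1 by rewrite ltr_wpDl ?addr_ge0.
near=> h.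
have [c [ch E]] := line_MVT (p + h *: a) h fb.
have -> : f (p + h *: (a + b)) - f p - h * ('D_a f p + 'D_b f p)
        = (f (p + h *: a) - f p - h * 'D_a f p)
          + h * ('D_b f (p + h *: a + c *: b) - 'D_b f p).
  by rewrite scalerDr addrA -[f (p + _ + _)](subrK (f (p + h *: a))) E; ring.
rewrite (le_trans (ler_normD _ _)) // [e]splitr mulrDl lerD //.
  by near: h; apply: cvg_within; exact: derive_approx.
rewrite normrM mulrC ler_wpM2r // distrC; apply: Db.
rewrite -ball_normE /ball_ /= -addrA opprD addrA subrr add0r normrN.
rewrite (le_lt_trans (ler_normD _ _)) // !normrZ.
have hdel : `|h| * (`|a| + `|b| + 1) < del.
  by rewrite -ltr_pdivlMr //; near: h; exact: dnbhs0_lt (divr_gt0 del0 ab0).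
apply: le_lt_trans hdel; rewrite !mulrDr mulr1.
by have := ler_wpM2r (normr_ge0 b) ch; have := normr_ge0 h; lra.
Unshelve. all: by end_near.
Qed.

Lemma derive_dirZ f p v (k : R) : derivable f p v -> 'D_(k *: v) f p = k * 'D_v f p.
Proof.
move=> fv; apply: derive_of_approx => e e0.
have k1 : 0 < `|k| + 1 by rewrite ltr_wpDl.
have hk : (fun h : R => h * k) @ 0^' --> (0 : R).
  apply: cvg_within_filter; have := @cvgMr_tmp _ _ _ _ id 0 k cvg_id; rewrite mul0r; exact.
near=> h.
have : `|f (p + (h * k) *: v) - f p - (h * k) * 'D_v f p| <= e / (`|k| + 1) * `|h * k|.
  by near: h; exact: hk _ (derive_approx fv (divr_gt0 e0 k1)).
rewrite scalerA mulrA => /le_trans; apply.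
have -> : e / (`|k| + 1) * `|h * k| = e * `|h| * (`|k| / (`|k| + 1)).
  by rewrite normrM; ring.
apply: ler_piMr; first by rewrite mulr_ge0 // ltW.
by rewrite ler_pdivrMr // mul1r lerDl.
Unshelve. all: by end_near.
Qed.

End DirectionalDerivative.

Section Gradient.
Variables (R : realType) (d : nat).

Definition grad (f : Vec R d -> R) (p : Vec R d) : Vec R d :=
  \row_i 'D_(delta_mx 0 i) f p.

Lemma derive_grad (f : Vec R d -> R) p v :
  (forall w x, derivable f x w) -> (forall w, continuous ('D_w f)) ->
  'D_v f p = dot (grad f p) v.
Proof.
move=> df cf; rewrite {1}(row_sum_delta v).
rewrite (big_morph (fun w => 'D_w f p) (fun a b => derive_dirD (df a p) (df b) (cf b p))
                   (derive0 f p)).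
by apply: eq_bigr => i _; rewrite derive_dirZ // mxE mulrC.
Qed.

End Gradient.

Unset Implicit Arguments.

Section ConvexHypersurface.
Context {R : realType} {d : nat} {g : Vec R d -> R}.
Hypothesis g_smooth : smooth g.
Hypothesis g_regular : forall q, g q = 0 -> exists v, 'D_v g q != 0.
Hypothesis g_convex : forall x y (t : R),
  g x < 0 -> g y < 0 -> 0 <= t <= 1 -> g ((1 - t) *: x + t *: y) < 0.
Hypothesis g_qconvex :
  forall q v, g q = 0 -> v != 0 -> tangent g q v -> 0 < dirder g [:: v; v] q.
Hypothesis g0 : g 0 < 0.
Hypothesis g_bounded : exists B, forall x, g x <= 0 -> enorm x <= B.

Let g_cont : continuous g := (g_smooth [::]).1.
Let dg w x : derivable g x w := (g_smooth [::]).2 x w.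
Let cg w : continuous ('D_w g) := (g_smooth [:: w]).1.
Let dgE p v : 'D_v g p = dot (grad g p) v := derive_grad p v dg cg.

Lemma grad_neq0 q : g q = 0 -> grad g q != 0.
Proof.
by move=> /g_regular[v]; rewrite dgE; apply: contraNneq => ->; rewrite dot0l.
Qed.

Lemma cvg_line p v : g (p + s *: v) @[s --> (0 : R)] --> g p.
Proof.
rewrite -{2}[p](addr0 p) -(scale0r v).
apply: (continuous_comp (f := fun s : R => p + s *: v)); last exact: g_cont.
by apply: cvgD; [exact: cvg_cst | apply: cvgZr_tmp; exact: cvg_id].
Qed.

Lemma near_line_lt p v c : g p < c -> \forall s \near 0^'+, g (p + s *: v) < c.
Proof. exact: cvgr_lt _ (cvg_at_right_filter (cvg_line p v)) c. Qed.

Lemma near_line_lt0 q w : g q = 0 -> 'D_w g q < 0 ->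
  \forall s \near 0^'+, g (q + s *: w) < 0.
Proof. by move=> gq; have := derive_lt0_decr (dg w q); rewrite gq. Qed.

Lemma le0_of_near_lt0 p v : (\forall s \near 0^'+, g (p + s *: v) < 0) -> g p <= 0.
Proof.
move=> neg; rewrite leNgt; apply/negP => gp.
have /filter_ex[s [/lt_trans/[apply]]] :
    \forall s \near 0^'+, g (p + s *: v) < 0 /\ 0 < g (p + s *: v).
  near=> s; split; near: s; first exact: neg.
  exact: cvgr_gt _ (cvg_at_right_filter (cvg_line p v)) _ gp.
by rewrite ltxx.
Unshelve. all: by end_near.
Qed.

Lemma support_halfspace q y : g q = 0 -> g y < 0 -> dot (grad g q) (y - q) <= 0.
Proof.
move=> gq gy; set G := grad g q.
have down : \forall s \near 0^'+, g (q + s *: - G) < 0.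
  by apply: near_line_lt0; rewrite // dgE dotNr oppr_lt0 dot_gt0 // grad_neq0.
rewrite -dgE; apply: derive_le0 => //; near=> t; rewrite gq.
have [t0 t1] : 0 < t /\ t < 1 by split; near: t; [exact: nbhs_right_gt | exact: nbhs_right_lt].
apply: (le0_of_near_lt0 _ ((1 - t) *: - G)); apply: filterS down => s gs.
have -> : q + t *: (y - q) + s *: ((1 - t) *: - G) = (1 - t) *: (q + s *: - G) + t *: y.
  by apply/rowP => i; rewrite !mxE; ring.
by apply: g_convex; rewrite ?ltW.
Unshelve. all: by end_near.
Qed.

Lemma dot_grad_gt0 q : g q = 0 -> 0 < dot (grad g q) q.
Proof.
move=> gq; set G := grad g q; have G0 : G != 0 by exact: grad_neq0.
have /filter_ex[s [s0 gs]] : \forall s \near 0^'+, 0 < s /\ g (0 + s *: G) < 0.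
  by near=> s; split; near: s; [exact: nbhs_right_gt | exact: near_line_lt].
have := support_halfspace q _ gq gs; rewrite add0r dotBr dotZr.
by have := mulr_gt0 s0 (dot_gt0 G0); lra.
Unshelve. all: by end_near.
Qed.

Lemma max_dot_sim_grad n q : n != 0 -> g q <= 0 ->
  (forall y, g y <= 0 -> dot n y <= dot n q) -> g q = 0 /\ sim n (grad g q).
Proof.
move=> n0 gq_le qmax.
have ascent w : (\forall s \near 0^'+, g (q + s *: w) < 0) -> dot n w <= 0.
  move=> neg; have /filter_ex[s [s0 gs]] : \forall s \near 0^'+, 0 < s /\ g (q + s *: w) < 0.
    by near=> s; split; near: s; [exact: nbhs_right_gt | exact: neg].
  by have := qmax _ (ltW gs); rewrite dotDr dotZr gerDl pmulr_rle0.
have gq : g q = 0.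
  apply/eqP; rewrite eq_le gq_le leNgt; apply/negP => /(near_line_lt q n)/ascent.
  by rewrite leNgt dot_gt0.
split => //; have G0 := grad_neq0 q gq.
have [|c c0 nG] := nonneg_multiple_of_halfspace G0 (n := n).
  by move=> w Gw; apply/ascent/near_line_lt0; rewrite // dgE.
exists c => //; rewrite lt_def c0 andbT; apply: contraNneq n0 => c00.
by rewrite nG c00 scale0r.
Unshelve. all: by end_near.
Qed.

Lemma reeb_colinear q r : g q = 0 -> is_reeb g q r ->
  exists2 c, c < 0 & Jst r = c *: grad g q.
Proof.
move=> gq [r_tan r_q]; set G := grad g q.
set c := dot (Jst r) G / dot G G.
have JrG : Jst r = c *: G.
  apply: colinear_of_orthogonal; first exact: grad_neq0.
  move=> u Gu; apply/eqP; rewrite dotC -oppr_eq0 -dotJl -/(omega u r) r_tan //.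
  by rewrite /tangent dgE.
exists c => //; move: r_q; rewrite /omega dotJl JrG dotZr dotC.
by have := dot_grad_gt0 q gq; nra.
Qed.

Lemma is_reeb_grad q : g q = 0 ->
  is_reeb g q ((dot (grad g q) q)^-1 *: Jst (grad g q)).
Proof.
move=> gq; split=> [v|]; rewrite /omega dotZr dotJJ.
  by rewrite /tangent dgE dotC => ->; rewrite mulr0.
by rewrite [dot q _]dotC mulVf // gt_eqF // dot_grad_gt0.
Qed.

Lemma reeb_simP q z : g q = 0 ->
  (exists r, is_reeb g q r /\ sim r z) <-> sim (- Jst z) (grad g q).
Proof.
move=> gq; set G := grad g q; split.
  move=> [r [/(reeb_colinear _ _ gq)[c c0 JrG] [l l0 rz]]].
  exists (- c / l); first by rewrite divr_gt0 // oppr_gt0.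
  have -> : Jst z = l^-1 *: Jst r by rewrite rz JstZ scalerA mulVf ?scale1r // gt_eqF.
  by rewrite JrG scalerA -scaleNr mulNr mulrC.
move=> [mu mu0 zG]; exists ((dot G q)^-1 *: Jst G); split; first exact: is_reeb_grad.
apply: simZ; first by rewrite invr_gt0 dot_grad_gt0.
exists mu^-1; rewrite ?invr_gt0 //.
have -> : G = mu^-1 *: - Jst z by rewrite zG scalerA mulVf ?scale1r // gt_eqF.
by rewrite JstZ JstN JstK opprK.
Qed.

Lemma is_outward_normal_sim q n : g q = 0 -> sim n (grad g q) -> enorm n = 1 ->
  is_outward_normal g q n.
Proof.
move=> gq [mu mu0 ->] n1; split=> //; split=> [v|].
  by rewrite /tangent dgE dotZl => ->; rewrite mulr0.
by rewrite dgE dotZr mulr_gt0 // dot_gt0 // grad_neq0.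
Qed.

Lemma near_line_lt0_sim q n : g q = 0 -> sim (grad g q) n ->
  \forall s \near 0^'+, g (q + s *: - n) < 0.
Proof.
move=> gq [c c0 Gq]; apply: near_line_lt0; rewrite // dgE Gq dotZl dotNr.
rewrite mulrN oppr_lt0 mulr_gt0 // dot_gt0 //.
by apply: contraTneq (grad_neq0 q gq) => n0; rewrite Gq n0 scaler0 eqxx.
Qed.

Lemma sim_grad_dot_le0 q1 q2 n : g q1 = 0 -> g q2 = 0 ->
  sim (grad g q1) n -> sim (grad g q2) n -> dot n (q2 - q1) <= 0.
Proof.
move=> g1 g2 G1n G2n; have [c1 c10 G1] := G1n.
apply: (@le0_of_near0_le_mul _ _ (dot n n)).
apply: filterS (near_line_lt0_sim q2 n g2 G2n) => s gs.
have := support_halfspace q1 _ g1 gs; rewrite G1 dotZl pmulr_rle0 //.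
have -> : q2 + s *: - n - q1 = (q2 - q1) - (s *: n) by apply/rowP => i; rewrite !mxE; ring.
by rewrite [dot n (q2 - q1 - _)]dotBr dotZr subr_le0.
Qed.

Lemma segment_in_level q1 q2 n : g q1 = 0 -> g q2 = 0 ->
  sim (grad g q1) n -> sim (grad g q2) n -> dot n (q2 - q1) = 0 ->
  forall t, 0 <= t <= 1 -> g (q1 + t *: (q2 - q1)) = 0.
Proof.
move=> g1 g2 G1n G2n nv t /andP[t0 t1]; apply/eqP; rewrite eq_le; apply/andP; split.
  apply: (le0_of_near_lt0 _ (- n)).
  apply: filterS2 (near_line_lt0_sim q1 n g1 G1n) (near_line_lt0_sim q2 n g2 G2n).
  move=> s gs1 gs2; have -> : q1 + t *: (q2 - q1) + s *: - n
                             = (1 - t) *: (q1 + s *: - n) + t *: (q2 + s *: - n).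
    by apply/rowP => i; rewrite !mxE; ring.
  by apply: g_convex; rewrite ?t0.
rewrite leNgt; apply/negP => gz; have [c1 c10 G1] := G1n.
have /filter_ex[s [s0 gs]] :
    \forall s \near 0^'+, 0 < s /\ g (q1 + t *: (q2 - q1) + s *: n) < 0.
  by near=> s; split; near: s; [exact: nbhs_right_gt | exact: near_line_lt].
have := support_halfspace q1 _ g1 gs; rewrite G1 dotZl.
have -> : q1 + t *: (q2 - q1) + s *: n - q1 = t *: (q2 - q1) + s *: n.
  by apply/rowP => i; rewrite !mxE; ring.
rewrite dotDr !dotZr nv mulr0 add0r pmulr_rle0 // pmulr_rle0 // leNgt dot_gt0 //.
by apply: contraTneq (grad_neq0 q1 g1) => n0; rewrite G1 n0 scaler0 eqxx.
Unshelve. all: by end_near.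
Qed.

Lemma sim_grad_inj q1 q2 n : g q1 = 0 -> g q2 = 0 ->
  sim (grad g q1) n -> sim (grad g q2) n -> q1 = q2.
Proof.
move=> g1 g2 G1n G2n; have [c1 c10 G1] := G1n.
have nv : dot n (q2 - q1) = 0.
  apply/eqP; rewrite eq_le sim_grad_dot_le0 //= -oppr_le0 -dotNr opprB.
  exact: sim_grad_dot_le0.
have seg := segment_in_level q1 q2 n g1 g2 G1n G2n nv.
apply/eqP; rewrite eq_sym -subr_eq0; apply: contraT => v0; set v := q2 - q1 in v0 nv seg.
have tan : tangent g q1 v by rewrite /tangent dgE G1 dotZl nv mulr0.
have Dv0 s : 0 <= s < 1 -> 'D_v g (q1 + s *: v) = 0.
  move=> /andP[s0 s1]; apply: derive_eq0 => //; near=> s'.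
  have [s'0 s'1] : 0 < s' /\ s' < 1 - s.
    by split; near: s'; [exact: nbhs_right_gt | apply: nbhs_right_lt; rewrite subr_gt0].
  by rewrite -addrA -scalerDl !seg ?s0 ?ltW //=; lra.
have D0 : 'D_v g q1 = 0 by rewrite -[q1]addr0 -(scale0r v) Dv0 // lexx ltr01.
have := g_qconvex q1 v g1 v0 tan; rewrite /= (@derive_eq0 _ _ _ q1 v) ?ltxx //.
  exact: (g_smooth [:: v]).2.
near=> s; rewrite D0 Dv0 //.
by apply/andP; split; near: s; [exact: nbhs_right_ge | exact: nbhs_right_lt].
Unshelve. all: by end_near.
Qed.

Lemma exists_dot_max n : exists q, g q <= 0 /\ forall y, g y <= 0 -> dot n y <= dot n q.
Proof.
have [B gB] := g_bounded; pose A := [set y | g y <= 0].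
have A0 : A !=set0 by exists 0; rewrite /A /= ltW.
have A_compact : compact A.
  apply: bounded_closed_compact.
    exists B; split; first exact: num_real.
    move=> M BM y /gB; rewrite /= => yB.
    by rewrite (le_trans (norm_le_enorm y)) // (le_trans yB) // ltW.
  rewrite (_ : A = g @^-1` [set r | r <= 0]) //.
  by apply: preimage_closed; [move=> x _; exact: g_cont | exact: closed_le].
have [q qA qmax] := EVT_max_rV A0 A_compact (continuous_subspaceT (dot_continuous (u := n))).
exists q; split; first by move: qA; rewrite inE.
by move=> y gy; apply: qmax; rewrite inE.
Qed.

Lemma reeb_sim_exists_unique z : z != 0 ->
  (exists! q, g q = 0 /\ exists r, is_reeb g q r /\ sim r z) /\
  (forall q, g q = 0 -> (exists r, is_reeb g q r /\ sim r z) ->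
     is_outward_normal g q (- ((enorm z)^-1 *: Jst z))).
Proof.
move=> z0; set n := - Jst z.
have ez : 0 < enorm z by exact: enorm_gt0.
have n0 : n != 0.
  by apply: contraTneq ez => n00; rewrite -enormJ -enormN -/n n00 /enorm dot0l sqrtr0 ltxx.
split.
  have [q [gq_le qmax]] := exists_dot_max n.
  have [gq nG] := max_dot_sim_grad n q n0 gq_le qmax.
  exists q; split; first by split=> //; apply/reeb_simP.
  move=> q' [gq' /(reeb_simP _ _ gq') nG'].
  exact: sim_grad_inj gq gq' (sim_sym nG) (sim_sym nG').
move=> q gq /(reeb_simP _ _ gq) nG; apply: is_outward_normal_sim => //.
  by rewrite -scalerN; apply: simZ; rewrite ?invr_gt0.
by rewrite enormN enormZ enormJ gtr0_norm ?invr_gt0 // mulVf // gt_eqF.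
Qed.

End ConvexHypersurface.

Theorem lemma2p4 (R : realType) (d : nat) (g : Vec R d -> R) :
  smooth_closed_hypersurface_defining g ->
  quadratically_convex_domain g ->
  g 0 < 0 ->
  forall x : Vec R d, 0 < g x ->
    (* n_-(x) *)
    (exists! q, g q = 0 /\ exists r, is_reeb g q r /\ sim r (- x)) /\
    (* n_+(x) *)
    (exists! q, g q = 0 /\ exists r, is_reeb g q r /\ sim r x) /\
    (* n_+(x) = G^{-1}(- J x / |x|) *)
    (forall q, g q = 0 -> (exists r, is_reeb g q r /\ sim r x) ->
       is_outward_normal g q (- ((enorm x)^-1 *: Jst x))) /\
    (* n_-(x) = G^{-1}(J x / |x|) *)
    (forall q, g q = 0 -> (exists r, is_reeb g q r /\ sim r (- x)) ->
       is_outward_normal g q ((enorm x)^-1 *: Jst x)).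
Proof.
move=> [g_smooth g_regular g_bounded] [g_convex g_qconvex] g0 x gx.
have x0 : x != 0 by apply: contraTneq gx => ->; rewrite -leNgt ltW.
have reeb := reeb_sim_exists_unique g_smooth g_regular g_convex g_qconvex g0 g_bounded.
have [uniq_plus normal_plus] := reeb x x0.
have [uniq_minus normal_minus] := reeb (- x) ltac:(by rewrite oppr_eq0).
do 3!split=> //; move=> q gq /(normal_minus q gq).
by rewrite enormN JstN scalerN opprK.
Qed.
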